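(* Let $n\ge1$, identify $\mathbb{R}^{n+1}=\mathbb{R}^n\times\mathbb{R}$, let $f\colon\mathbb{R}^n\to(0,\infty)$ be continuous with epigraph $L=\{(x,y)\mid f(x)\le y\}$, and let $K\subset\mathbb{R}^{n+1}$ be a nonempty closed set with $K\cap L=\emptyset$ containing a point $(x_*,y_* )$ with $y_*\le 0$. Then the upper equidistant function $G^+$ associated with $K$ and $L$ is upper semi-continuous and the lower equidistant function $G^-$ is lower semi-continuous on $\mathbb{R}^n$.
   Context: $d(p,A)=\inf\{|p-q|\mid q\in A\}$ (Euclidean distance). $G^+(x)=\sup\{y\in\mathbb{R}\mid d((x,y),K)=d((x,y),L)\}$ and $G^-(x)=\inf\{y\in\mathbb{R}\mid d((x,y),K)=d((x,y),L)\}$ (under the stated assumptions these sets are nonempty and bounded, so $G^\pm(x)$ are real numbers). *)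

From HB Require Import structures.
From mathcomp Require Import all_boot all_order all_algebra.
From mathcomp Require Import all_classical all_reals all_analysis.
Set Implicit Arguments. Unset Strict Implicit. Unset Printing Implicit Defensive.
Import Order.TTheory GRing.Theory Num.Theory.
Import numFieldNormedType.Exports.
Local Open Scope classical_set_scope.
Local Open Scope ring_scope.

Definition eucl_dist {R : realType} {n : nat} (p q : 'rV[R]_n * R) : R :=
  Num.sqrt (\sum_(i < n) (p.1 ord0 i - q.1 ord0 i) ^+ 2 + (p.2 - q.2) ^+ 2).

Definition dist_set {R : realType} {n : nat} (p : 'rV[R]_n * R)
  (A : set ('rV[R]_n * R)) : R :=
  inf [set eucl_dist p q | q in A].

Definition epigraph {R : realType} {n : nat} (f : 'rV[R]_n -> R)
  : set ('rV[R]_n * R) := [set p | f p.1 <= p.2].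

Definition Gplus {R : realType} {n : nat} (K L : set ('rV[R]_n * R))
  (x : 'rV[R]_n) : R :=
  sup [set y : R | dist_set (x, y) K = dist_set (x, y) L].

Definition Gminus {R : realType} {n : nat} (K L : set ('rV[R]_n * R))
  (x : 'rV[R]_n) : R :=
  inf [set y : R | dist_set (x, y) K = dist_set (x, y) L].

Definition upper_semicont {R : realType} {T : topologicalType} (g : T -> R) :=
  forall x (a : R), g x < a -> \forall z \near x, g z < a.

Definition lower_semicont {R : realType} {T : topologicalType} (g : T -> R) :=
  forall x (a : R), a < g x -> \forall z \near x, a < g z.

From HB Require Import structures.
From mathcomp Require Import all_boot all_order all_algebra.
From mathcomp Require Import all_classical all_reals all_analysis.
From mathcomp Require Import ring lra.
Import Order.TTheory GRing.Theory Num.Theory.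
Import numFieldNormedType.Exports.
Local Open Scope classical_set_scope.
Local Open Scope ring_scope.

(* Let h(x, y) = d((x, y), K) - d((x, y), L), so that G^+(x) and G^-(x) are the
   sup and the inf of the zero set of h(x, .). The function h is 2-Lipschitz,
   hence continuous in y and uniformly continuous in x. It is positive on L,
   since K is closed and disjoint from L, and, locally uniformly in x, negative
   for y far below 0: there d((x, y), K) is controlled by a point of K at height
   at most 0, while points of L are either horizontally far from x or lie above
   the positive minimum of f on a compact set. If G^+(x) < a, the intermediate
   value theorem makes h(x, .) positive on [a', oo) for some a' < a, so h(x, .)
   is bounded below by some d > 0 on a segment [a', M] above which (z, y) lies
   in L for all z near x. For such z, h(z, .) is d-close to h(x, .), hence has
   no zero above a'. The lower function is handled by the reflection y |-> -y. *)

Section EuclideanNorm.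
Context {R : realType} {m : nat}.
Implicit Types u v : 'rV[R]_m.

Definition enorm v := Num.sqrt (\sum_i v ord0 i ^+ 2).

Lemma enorm_ge0 v : 0 <= enorm v.
Proof. exact: sqrtr_ge0. Qed.

Lemma sumr_sqr_ge0 v : 0 <= \sum_i v ord0 i ^+ 2.
Proof. by apply: sumr_ge0 => i _; exact: sqr_ge0. Qed.

Lemma sqr_enorm v : enorm v ^+ 2 = \sum_i v ord0 i ^+ 2.
Proof. exact/sqr_sqrtr/sumr_sqr_ge0. Qed.

Lemma enormN v : enorm (- v) = enorm v.
Proof. by congr Num.sqrt; apply: eq_bigr => i _; rewrite mxE sqrrN. Qed.

Lemma lagrange_identity u v :
  2 * ((\sum_i u ord0 i ^+ 2) * (\sum_i v ord0 i ^+ 2)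
       - (\sum_i u ord0 i * v ord0 i) ^+ 2)
  = \sum_i \sum_j (u ord0 i * v ord0 j - u ord0 j * v ord0 i) ^+ 2.
Proof.
pose a i := u ord0 i ^+ 2; pose b i := v ord0 i ^+ 2; pose c i := u ord0 i * v ord0 i.
have expand i j : (u ord0 i * v ord0 j - u ord0 j * v ord0 i) ^+ 2
    = a i * b j + a j * b i - (c i * c j) *+ 2 by rewrite /a /b /c; ring.
under [RHS]eq_bigr => i _ do under eq_bigr => j _ do rewrite expand.
rewrite expr2 !big_distrlr /=.
under [RHS]eq_bigr do rewrite sumrB big_split sumrMnl /=.
rewrite sumrB big_split sumrMnl /= (exchange_big _ _ _ _ _ (fun i j => a j * b i)) /=.
ring.
Qed.

Lemma cauchy_schwarz u v : \sum_i u ord0 i * v ord0 i <= enorm u * enorm v.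
Proof.
have sqr_le : (\sum_i u ord0 i * v ord0 i) ^+ 2
    <= (\sum_i u ord0 i ^+ 2) * (\sum_i v ord0 i ^+ 2).
  rewrite -subr_ge0 -(pmulr_rge0 _ (ltr0n R 2)) lagrange_identity.
  by do 2!(apply: sumr_ge0 => ? _); exact: sqr_ge0.
rewrite /enorm -sqrtrM ?sumr_sqr_ge0 // (le_trans (ler_norm _)) //.
by rewrite -sqrtr_sqr ler_sqrt // mulr_ge0 ?sumr_sqr_ge0.
Qed.

Lemma enormD u v : enorm (u + v) <= enorm u + enorm v.
Proof.
rewrite -ler_sqr ?nnegrE ?addr_ge0 ?enorm_ge0 // sqrrD !sqr_enorm.
have -> : \sum_i (u + v) ord0 i ^+ 2
    = \sum_i u ord0 i ^+ 2 + (\sum_i u ord0 i * v ord0 i) *+ 2 + \sum_i v ord0 i ^+ 2.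
  rewrite -sumrMnl -!big_split /=; apply: eq_bigr => i _; rewrite mxE; ring.
by rewrite lerD2r lerD2l lerMn2r cauchy_schwarz.
Qed.

Lemma coord_le_enorm v i : `|v ord0 i| <= enorm v.
Proof.
rewrite -sqrtr_sqr ler_sqrt ?sumr_sqr_ge0 // (bigD1 i) //= lerDl.
by apply: sumr_ge0 => j _; exact: sqr_ge0.
Qed.

Lemma enorm_le_coord v e : 0 <= e -> (forall i, `|v ord0 i| <= e) -> enorm v <= m%:R * e.
Proof.
move=> e0 ve; rewrite -[leRHS]ger0_norm ?mulr_ge0 // -sqrtr_sqr ler_sqrt ?sqr_ge0 //.
apply: (@le_trans _ _ (\sum_(i < m) e ^+ 2)).
  by apply: ler_sum => i _; rewrite -real_normK ?num_real // ler_sqr ?nnegrE.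
rewrite sumr_const card_ord -[leLHS]mulr_natl exprMn ler_wpM2r ?sqr_ge0 //.
by rewrite -natrX ler_nat; have [->|/leq_pmulr] := posnP m.
Qed.
End EuclideanNorm.

Section EuclideanDistance.
Context {R : realType} {n : nat}.
Implicit Types p q r : 'rV[R]_n * R.

Definition row_of_pair p : 'rV[R]_(n + 1) := row_mx p.1 (const_mx p.2).

Lemma row_of_pairB p q :
  row_of_pair p - row_of_pair q = row_mx (p.1 - q.1) (const_mx (p.2 - q.2)).
Proof.
rewrite opp_row_mx add_row_mx; congr row_mx.
by apply/matrixP => i j; rewrite !mxE.
Qed.

Lemma eucl_distE p q : eucl_dist p q = enorm (row_of_pair p - row_of_pair q).
Proof.
rewrite row_of_pairB /enorm big_split_ord big_ord1 /=; congr (Num.sqrt (_ + _)).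
  by apply: eq_bigr => i _; rewrite row_mxEl !mxE.
by rewrite row_mxEr mxE.
Qed.

Lemma eucl_dist_ge0 p q : 0 <= eucl_dist p q.
Proof. exact: sqrtr_ge0. Qed.

Lemma eucl_distC p q : eucl_dist p q = eucl_dist q p.
Proof. by rewrite !eucl_distE -enormN opprB. Qed.

Lemma eucl_dist_triangle p q r : eucl_dist p r <= eucl_dist p q + eucl_dist q r.
Proof.
rewrite !eucl_distE; have -> : row_of_pair p - row_of_pair r
    = (row_of_pair p - row_of_pair q) + (row_of_pair q - row_of_pair r).
  by rewrite addrA subrK.
exact: enormD.
Qed.

Lemma eucl_dist_coord1 p q i : `|p.1 ord0 i - q.1 ord0 i| <= eucl_dist p q.
Proof.
have := coord_le_enorm (row_of_pair p - row_of_pair q) (lshift 1 i).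
by rewrite -eucl_distE row_of_pairB row_mxEl !mxE.
Qed.

Lemma eucl_dist_coord2 p q : `|p.2 - q.2| <= eucl_dist p q.
Proof.
have := coord_le_enorm (row_of_pair p - row_of_pair q) (rshift n ord0).
by rewrite -eucl_distE row_of_pairB row_mxEr mxE.
Qed.

Lemma eucl_dist_vert (x : 'rV[R]_n) y y' : eucl_dist (x, y) (x, y') = `|y - y'|.
Proof. by rewrite /eucl_dist big1 ?add0r ?sqrtr_sqr // => i _; rewrite subrr expr0n. Qed.

Lemma eucl_dist_xx p : eucl_dist p p = 0.
Proof. by case: p => x y; rewrite eucl_dist_vert subrr normr0. Qed.

Lemma eucl_dist_horiz (z x : 'rV[R]_n) y :
  eucl_dist (z, y) (x, y) = eucl_dist (z, 0) (x, 0).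
Proof. by rewrite /eucl_dist /= !subrr. Qed.

Lemma eucl_dist_split (z x : 'rV[R]_n) y y' :
  eucl_dist (z, y) (x, y') = Num.sqrt (eucl_dist (z, 0) (x, 0) ^+ 2 + (y - y') ^+ 2).
Proof.
rewrite [in RHS]/eucl_dist sqr_sqrtr /= ?subrr ?expr0n ?addr0 //.
by apply: sumr_ge0 => i _; exact: sqr_ge0.
Qed.

Lemma eucl_dist_lt_ball p q e : eucl_dist p q < e -> ball p e q.
Proof.
move=> pqe; have e0 : 0 < e := le_lt_trans (eucl_dist_ge0 p q) pqe.
split; last exact: le_lt_trans (eucl_dist_coord2 p q) pqe.
split=> // i j; rewrite /ball /= (ord1 i).
exact: le_lt_trans (eucl_dist_coord1 p q j) pqe.
Qed.

Lemma ball_eucl_dist_le p q e : ball p e q -> eucl_dist p q <= (n + 1)%:R * e.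
Proof.
case=> -[e0 b1] b2; rewrite eucl_distE; apply: enorm_le_coord (ltW e0) _ => i.
rewrite row_of_pairB -(splitK i); case: (fintype.split i) => [j|k] /=.
  by rewrite row_mxEl !mxE; exact/ltW/b1.
by rewrite row_mxEr mxE; exact/ltW.
Qed.

Lemma near_eucl_dist_horiz (x : 'rV[R]_n) (d : R) :
  0 < d -> \forall z \near x, eucl_dist (z, 0) (x, 0) < d.
Proof.
move=> d0; have e0 : 0 < d / 2 / (n + 1)%:R by rewrite !divr_gt0 // ltr0n addn1.
apply: filterS (nbhsx_ballx x _ e0) => z xz.
have xz0 : ball (x, 0 : R) (d / 2 / (n + 1)%:R) (z, 0) by split => //; exact: ballxx.
have := ball_eucl_dist_le _ _ _ xz0.
by rewrite eucl_distC mulrC divfK ?pnatr_eq0 ?addn1 //; lra.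
Qed.
End EuclideanDistance.

Section DistanceToSet.
Context {R : realType} {n : nat}.
Implicit Types (p q : 'rV[R]_n * R) (A : set ('rV[R]_n * R)).

Lemma dist_set_le p A q : A q -> dist_set p A <= eucl_dist p q.
Proof.
move=> Aq; apply: ge_inf; last by exists q.
by exists 0 => _ [r _ <-]; exact: eucl_dist_ge0.
Qed.

Lemma dist_set_ge p A b :
  A !=set0 -> (forall q, A q -> b <= eucl_dist p q) -> b <= dist_set p A.
Proof.
move=> [q0 Aq0] bA; apply: lb_le_inf; first by exists (eucl_dist p q0), q0.
by move=> _ [q Aq <-]; exact: bA.
Qed.

Lemma dist_set_eq0 p A : A p -> dist_set p A = 0.
Proof.
move=> Ap; apply/eqP; rewrite eq_le -{1}(eucl_dist_xx p) dist_set_le //=.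
by apply: dist_set_ge => [|q _]; [exists p | exact: eucl_dist_ge0].
Qed.

Lemma dist_set_gt0 p A : closed A -> A !=set0 -> ~ A p -> 0 < dist_set p A.
Proof.
move=> /closed_openC; rewrite openE => /[swap] A0 /[swap] Ap /(_ p Ap).
move=> /nbhs_ballP[e e0 pe]; apply: (lt_le_trans e0); apply: dist_set_ge => // q Aq.
by rewrite leNgt; apply/negP => /eucl_dist_lt_ball /pe.
Qed.

Lemma dist_set_lipschitz p q A :
  A !=set0 -> `|dist_set p A - dist_set q A| <= eucl_dist p q.
Proof.
move=> A0.
have lip p' q' : dist_set p' A <= dist_set q' A + eucl_dist p' q'.
  rewrite -lerBlDr; apply: dist_set_ge => // r Ar.
  rewrite lerBlDr addrC (le_trans (dist_set_le p' _ _ Ar)) //; exact: eucl_dist_triangle.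
have := lip p q; have := lip q p; rewrite eucl_distC ler_norml; lra.
Qed.

Lemma dist_set_le_below A xs ys z y :
  A (xs, ys) -> y <= ys <= 0 ->
  dist_set (z, y) A <= Num.sqrt (eucl_dist (z, 0) (xs, 0) ^+ 2 + y ^+ 2).
Proof.
move=> Axs /andP[yys ys0]; apply: le_trans (dist_set_le _ _ _ Axs) _.
rewrite eucl_dist_split; apply: ler_wsqrtr; rewrite lerD2l.
by rewrite -[y ^+ 2]sqrrN -[(y - ys) ^+ 2]sqrrN ler_sqr ?nnegrE; lra.
Qed.

Lemma dist_set_epigraph_ge (f : 'rV[R]_n -> R) z y r c :
  (forall x, 0 <= f x) -> 0 <= r -> 0 <= c -> y <= 0 ->
  (forall x, eucl_dist (z, 0) (x, 0) < r -> c <= f x) ->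
  Num.sqrt (Num.min (r ^+ 2) (- 2 * c * y) + y ^+ 2) <= dist_set (z, y) (epigraph f).
Proof.
move=> f_ge0 r0 c0 y0 fc; apply: dist_set_ge.
  by exists (z, f z); rewrite /epigraph /= lexx.
move=> [x y'] /= fxy'; rewrite eucl_dist_split; apply: ler_wsqrtr.
have e0 := eucl_dist_ge0 (z, 0) (x, 0).
have y'_ge : f x <= y' := fxy'.
have [far|close] := leP r (eucl_dist (z, 0) (x, 0)).
  have min_le : Num.min (r ^+ 2) (- 2 * c * y) <= r ^+ 2 by rewrite ge_min lexx.
  have : r ^+ 2 <= eucl_dist (z, 0) (x, 0) ^+ 2 by rewrite ler_sqr ?nnegrE.
  have : y ^+ 2 <= (y - y') ^+ 2.
    by rewrite -[(y - y') ^+ 2]sqrrN opprB -sqrrN ler_sqr ?nnegrE; have := f_ge0 x; lra.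
  lra.
have min_le : Num.min (r ^+ 2) (- 2 * c * y) <= - 2 * c * y by rewrite ge_min lexx orbT.
have : (c - y) ^+ 2 <= (y - y') ^+ 2.
  by rewrite -[(y - y') ^+ 2]sqrrN opprB ler_sqr ?nnegrE; have := fc x close; lra.
have : (c - y) ^+ 2 = c ^+ 2 - 2 * c * y + y ^+ 2 by ring.
have := sqr_ge0 c; have := sqr_ge0 (eucl_dist (z, 0) (x, 0)); lra.
Qed.

End DistanceToSet.

Lemma lipschitz_continuous {R : realType} (g : R -> R) k : 0 <= k ->
  (forall y y', `|g y - g y'| <= k * `|y - y'|) -> continuous g.
Proof.
move=> k0 gk y; apply/cvgrPdist_lt => e e0.
have k1 : 0 < k + 1 by lra.
near=> t; apply: le_lt_trans (gk y t) _.
apply: (@le_lt_trans _ _ ((k + 1) * `|y - t|)); first by rewrite ler_wpM2r //; lra.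
rewrite -ltr_pdivlMl // mulrC; near: t.
by apply/nbhs_normP; exists (e / (k + 1)) => //; exact: divr_gt0.
Unshelve. all: by end_near.
Qed.

Lemma continuous_gt0_box_lbound {R : realType} {n : nat} (f : 'rV[R]_n -> R)
    (x0 : 'rV[R]_n) (rho : R) :
  continuous f -> (forall x, 0 < f x) -> 0 <= rho ->
  exists2 c : R, 0 < c &
    forall x : 'rV[R]_n, (forall i, `|x ord0 i - x0 ord0 i| <= rho) -> c <= f x.
Proof.
move=> f_cont f_gt0 rho0.
pose box := [set x : 'rV[R]_n |
  forall i, `[x0 ord0 i - rho, x0 ord0 i + rho]%classic (x ord0 i)].
have box0 : box !=set0 by exists x0 => i /=; rewrite in_itv /=; apply/andP; split; lra.
have box_compact : compact box.
  apply: (@rV_compact _ _ (fun i => `[x0 ord0 i - rho, x0 ord0 i + rho]%classic)).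
  by move=> i; exact: segment_compact.
have [c _ cmin] := EVT_min_rV box0 box_compact (continuous_subspaceT f_cont).
exists (f c) => // x xbox; apply: cmin; rewrite inE => i /=.
by move: (xbox i); rewrite ler_norml in_itv /= => /andP[? ?]; apply/andP; split; lra.
Qed.

Section ZeroSetBounds.
Context {R : realType} {T : topologicalType} {h : T -> R -> R}.
Hypothesis h_cont : forall x, continuous (h x).
Hypothesis h_unif : forall (x : T) (e : R), 0 < e ->
  \forall z \near x, forall y, `|h z y - h x y| < e.
Hypothesis h_pos :
  forall x : T, exists b : R, \forall z \near x, forall y, b <= y -> 0 < h z y.
Hypothesis h_neg :
  forall x : T, exists b : R, \forall z \near x, forall y, y <= b -> h z y < 0.

Lemma IVT_zero {x a b} : a <= b -> h x a <= 0 -> 0 <= h x b ->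
  exists2 c, c \in `[a, b] & h x c = 0.
Proof.
move=> ab ha hb; apply: IVT => //; first exact: continuous_subspaceT.
by rewrite ge_min ha le_max hb orbT.
Qed.

Lemma zero_set_neq0 z : [set y | h z y = 0] !=set0.
Proof.
have [b1 /nbhs_singleton hb1] := h_pos z; have [b2 /nbhs_singleton hb2] := h_neg z.
have [c _ hc] : exists2 c, c \in `[Num.min b2 b1, b1] & h z c = 0.
  apply: IVT_zero; first by rewrite ge_min lexx orbT.
    by apply/ltW/hb2; rewrite ge_min lexx.
  exact/ltW/hb1.
by exists c.
Qed.

Lemma zero_set_has_ubound z : has_ubound [set y | h z y = 0].
Proof.
have [b /nbhs_singleton hb] := h_pos z; exists b => y /= hy0.
by rewrite leNgt; apply/negP => /ltW/hb; rewrite hy0 ltxx.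
Qed.

Lemma gt0_above_sup_zero_set x y : sup [set y | h x y = 0] < y -> 0 < h x y.
Proof.
move=> supy; rewrite ltNge; apply/negP => hy.
have [b /nbhs_singleton hb] := h_pos x.
have [yb bb] : y <= Num.max y b /\ b <= Num.max y b by rewrite !le_max !lexx orbT.
have [c] := IVT_zero yb hy (ltW (hb _ bb)).
rewrite in_itv /= => /andP[yc _] /= hc0.
have := ub_le_sup (zero_set_has_ubound x) hc0; lra.
Qed.

Lemma sup_zero_set_usc : upper_semicont (fun z => sup [set y | h z y = 0]).
Proof.
move=> x a supa; set s := sup _ in supa.
pose a' := (s + a) / 2; have sa' : s < a' by rewrite /a'; lra.
have [b hb] := h_pos x; pose M := Num.max a' b.
have [a'M bM] : a' <= M /\ b <= M by rewrite !le_max !lexx orbT.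
have [c0 c0I c0min] := EVT_min a'M (continuous_subspaceT (h_cont x)).
have d0 : 0 < h x c0.
  apply/gt0_above_sup_zero_set/(lt_le_trans sa').
  by move: c0I; rewrite in_itv /= => /andP[].
apply: filterS2 (h_unif x _ d0) hb => z hzx hzb.
apply: le_lt_trans (_ : a' < a); last by rewrite /a'; lra.
apply: ge_sup; first exact: zero_set_neq0.
move=> y /= hy0; rewrite leNgt; apply/negP => a'y.
have [yM|My] := leP y M.
  have := c0min y; rewrite in_itv /= (ltW a'y) yM => /(_ isT).
  have := hzx y; rewrite hy0 sub0r normrN => /(le_lt_trans (ler_norm _)); lra.
by have := hzb y (le_trans bM (ltW My)); rewrite hy0 ltxx.
Qed.

End ZeroSetBounds.

Lemma inf_zero_set_lsc {R : realType} {T : topologicalType} {h : T -> R -> R} :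
  (forall x, continuous (h x)) ->
  (forall (x : T) (e : R), 0 < e -> \forall z \near x, forall y, `|h z y - h x y| < e) ->
  (forall x : T, exists b : R, \forall z \near x, forall y, b <= y -> 0 < h z y) ->
  (forall x : T, exists b : R, \forall z \near x, forall y, y <= b -> h z y < 0) ->
  lower_semicont (fun z => inf [set y | h z y = 0]).
Proof.
move=> h_cont h_unif h_pos h_neg.
pose g z y := - h z (- y).
have zero_setN z : -%R @` [set y | h z y = 0] = [set y | g z y = 0].
  apply/seteqP; split => [_ [y /= hy0 <-]|y /= /eqP]; first by rewrite /g opprK hy0 oppr0.
  by rewrite oppr_eq0 => /eqP hy0; exists (- y); rewrite ?opprK.
have usc : upper_semicont (fun z => sup [set y | g z y = 0]).
  apply: sup_zero_set_usc.
  - move=> x y; apply: continuousN.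
    by apply: continuous_comp; [exact: opp_continuous|exact: h_cont].
  - move=> x e e0; apply: filterS (h_unif x e e0) => z hz y.
    by rewrite /g -opprD normrN.
  - move=> x; have [b hb] := h_neg x; exists (- b); apply: filterS hb => z hz y yb.
    by rewrite /g oppr_gt0; apply: hz; rewrite lerNl.
  - move=> x; have [b hb] := h_pos x; exists (- b); apply: filterS hb => z hz y yb.
    by rewrite /g oppr_lt0; apply: hz; rewrite lerNr.
move=> x a; rewrite /inf zero_setN ltrNr => /usc.
by apply: filterS => z; rewrite zero_setN ltrNr.
Qed.

Section DistanceGap.
Context {R : realType} {n : nat} (f : 'rV[R]_n -> R) (K : set ('rV[R]_n * R)).
Hypotheses (f_cont : continuous f) (f_gt0 : forall x, 0 < f x).
Hypotheses (K_closed : closed K) (K_neq0 : K !=set0) (K_disj : K `&` epigraph f = set0).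

Definition dist_gap z y := dist_set (z, y) K - dist_set (z, y) (epigraph f).

Let epigraph_neq0 : epigraph f !=set0.
Proof. by exists (0, f 0); rewrite /epigraph /= lexx. Qed.

Lemma dist_gap_lipschitz z y z' y' :
  `|dist_gap z y - dist_gap z' y'| <= 2 * eucl_dist (z, y) (z', y').
Proof.
have lipK := dist_set_lipschitz (z, y) (z', y') _ K_neq0.
have lipL := dist_set_lipschitz (z, y) (z', y') _ epigraph_neq0.
set dK := dist_set _ K in lipK; set dK' := dist_set _ K in lipK.
set dL := dist_set _ (epigraph f) in lipL; set dL' := dist_set _ (epigraph f) in lipL.
have -> : dist_gap z y - dist_gap z' y' = (dK - dK') - (dL - dL').
  by rewrite /dist_gap; ring.
by apply: le_trans (ler_normB _ _) _; lra.
Qed.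

Lemma dist_gap_continuous z : continuous (dist_gap z).
Proof.
apply: (@lipschitz_continuous _ _ 2) => // y y'.
by rewrite -(eucl_dist_vert z y y'); exact: dist_gap_lipschitz.
Qed.

Lemma dist_gap_near_unif (x : 'rV[R]_n) (e : R) :
  0 < e -> \forall z \near x, forall y, `|dist_gap z y - dist_gap x y| < e.
Proof.
move=> e0; apply: filterS (near_eucl_dist_horiz x _ (divr_gt0 e0 (ltr0n R 2))) => z zx y.
by apply: le_lt_trans (dist_gap_lipschitz _ _ _ _) _; rewrite eucl_dist_horiz; lra.
Qed.

Lemma dist_gap_gt0 z y : f z <= y -> 0 < dist_gap z y.
Proof.
move=> fzy; have Lzy : epigraph f (z, y) by [].
have notKzy : ~ K (z, y).
  by move=> Kzy; have : (K `&` epigraph f) (z, y) by []; rewrite K_disj.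
by rewrite /dist_gap (dist_set_eq0 _ _ Lzy) subr0; apply: dist_set_gt0.
Qed.

Lemma dist_gap_gt0_above (x : 'rV[R]_n) :
  exists b : R, \forall z \near x, forall y, b <= y -> 0 < dist_gap z y.
Proof.
have fx1 : \forall z \near x, `|f x - f z| < 1.
  exact: (cvgrPdist_lt _ _).1 (f_cont x) 1 ltr01.
exists (f x + 1); apply: filterS fx1 => z fxz y fy.
by apply: dist_gap_gt0; move: fxz; rewrite ltr_norml => /andP[+ _]; lra.
Qed.

Lemma dist_gap_lt0_below xs ys (x0 : 'rV[R]_n) : K (xs, ys) -> ys <= 0 ->
  exists b : R, \forall z \near x0, forall y, y <= b -> dist_gap z y < 0.
Proof.
move=> K_xs ys_le0; pose D := eucl_dist (x0, 0) (xs, 0) + 1.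
have D1 : 1 <= D by rewrite /D lerDr eucl_dist_ge0.
have D2 : 0 <= D + 2 by lra.
have [c c0 fc] := continuous_gt0_box_lbound f x0 (D + 2) f_cont f_gt0 D2.
(* Below this level d((z, y), K)^2 <= D^2 + y^2 < D^2 + 1 + y^2 <= d((z, y), L)^2. *)
exists (Num.min ys (- (D ^+ 2 + 1) / (2 * c))).
apply: filterS (near_eucl_dist_horiz x0 _ ltr01) => z zx0 y.
rewrite le_min => /andP[yys]; rewrite ler_pdivlMr ?mulr_gt0 // => ycD.
have zxs : eucl_dist (z, 0) (xs, 0) <= D.
  by apply: le_trans (eucl_dist_triangle _ (x0, 0) _) _; rewrite /D; lra.
have fc_near x : eucl_dist (z, 0) (x, 0) < D + 1 -> c <= f x.
  move=> zx; apply: fc => i; apply: le_trans (eucl_dist_coord1 (x, 0) (x0, 0) i) _.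
  by apply: le_trans (eucl_dist_triangle _ (z, 0) _) _; rewrite eucl_distC; lra.
rewrite /dist_gap subr_lt0.
have yys0 : y <= ys <= 0 by rewrite yys.
apply: le_lt_trans (dist_set_le_below _ _ _ _ _ K_xs yys0) _.
have f_ge0 x : 0 <= f x by exact/ltW.
have D1_ge0 : 0 <= D + 1 by lra.
have y_le0 : y <= 0 by lra.
apply: lt_le_trans _ (dist_set_epigraph_ge _ _ _ _ _ f_ge0 D1_ge0 (ltW c0) y_le0 fc_near).
have zxs_sqr : eucl_dist (z, 0) (xs, 0) ^+ 2 <= D ^+ 2.
  by rewrite ler_sqr ?nnegrE ?eucl_dist_ge0 //; lra.
have D_sqr : (D + 1) ^+ 2 = D ^+ 2 + 2 * D + 1 by ring.
have lt_min_gap : eucl_dist (z, 0) (xs, 0) ^+ 2 < Num.min ((D + 1) ^+ 2) (- 2 * c * y).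
  have cy : - 2 * c * y = - (y * (2 * c)) by ring.
  by rewrite lt_min; apply/andP; split; lra.
have d2 := sqr_ge0 (eucl_dist (z, 0) (xs, 0)); have y2 := sqr_ge0 y.
by rewrite ltr_sqrt; lra.
Qed.
End DistanceGap.

Theorem corollary4 (R : realType) (n : nat) (f : 'rV[R]_n -> R)
  (K : set ('rV[R]_n * R)) :
  (1 <= n)%N ->
  continuous f ->
  (forall x, 0 < f x) ->
  closed K ->
  K !=set0 ->
  K `&` epigraph f = set0 ->
  (exists p, K p /\ p.2 <= 0) ->
  upper_semicont (Gplus K (epigraph f)) /\
  lower_semicont (Gminus K (epigraph f)).
Proof.
move=> _ f_cont f_gt0 K_closed K_neq0 K_disj [[xs ys] [K_xs ys_le0]].
have equidistE x : [set y | dist_set (x, y) K = dist_set (x, y) (epigraph f)]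
    = [set y | dist_gap f K x y = 0].
  apply/seteqP; split => y /= hy; first by rewrite /dist_gap hy subrr.
  by apply/eqP; rewrite -subr_eq0 -[_ - _]/(dist_gap f K x y) hy.
have h_cont := dist_gap_continuous f K K_neq0.
have h_unif := dist_gap_near_unif f K K_neq0.
have h_pos := dist_gap_gt0_above f K f_cont K_closed K_neq0 K_disj.
have h_neg x := dist_gap_lt0_below f K f_cont f_gt0 xs ys x K_xs ys_le0.
split.
  have -> : Gplus K (epigraph f) = fun x => sup [set y | dist_gap f K x y = 0].
    by apply/funext => x; rewrite /Gplus equidistE.
  exact: sup_zero_set_usc h_cont h_unif h_pos h_neg.
have -> : Gminus K (epigraph f) = fun x => inf [set y | dist_gap f K x y = 0].
  by apply/funext => x; rewrite /Gminus equidistE.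
exact: inf_zero_set_lsc h_cont h_unif h_pos h_neg.
Qed.
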